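(* Let $a,b$ be non-negative integers and $c=1$ such that the polynomial $x^3-ax^2-bx-c$ has exactly one real root $\eta_1$, and $\eta_1>1$. Then there exists a real number $U$ such that for any positive integers $n,k$ with $k\ge 4$ and $n\ge U\eta_1^{3k/2}$, there is a positive integer sequence $\langle x_i\rangle_{i=1}^k$ satisfying $x_{i+3}=ax_{i+2}+bx_{i+1}+cx_i$ for $1\le i\le k-3$ and terminating at $x_k=n$.
   Context: A sequence $\langle x_i\rangle_{i=1}^k$ is positive if $x_1,x_2,x_3>0$. *)

From Stdlib Require Import Reals Lra Lia ZArith.
Open Scope R_scope.

(* A sequence <x_i>_{i=1}^k (indexed from 1; values outside 1..k irrelevant)
   is positive if x_1, x_2, x_3 > 0 (definition from the paper's context). *)
Definition positive_seq (x : nat -> Z) : Prop :=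
  (0 < x 1%nat)%Z /\ (0 < x 2%nat)%Z /\ (0 < x 3%nat)%Z.

Definition satisfies_rec (a b c : Z) (k : nat) (x : nat -> Z) : Prop :=
  forall i : nat, (1 <= i)%nat -> (i <= k - 3)%nat ->
    x (i + 3)%nat = (a * x (i + 2)%nat + b * x (i + 1)%nat + c * x i)%Z.

Definition cubic (a b c : Z) (t : R) : R :=
  t ^ 3 - IZR a * t ^ 2 - IZR b * t - IZR c.

From Stdlib Require Import Reals ZArith Lra Lia Psatz.
Open Scope R_scope.

(* Factor the characteristic polynomial as (t - eta) (t^2 + s t + r).  Since
   eta is its only real root, the quadratic factor is positive definite, and
   r eta = c = 1.  Run the recurrence backwards from n, floor(n/eta),
   floor(floor(n/eta)/eta).  Along this backward sequence w the coordinate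
   w_j + s w_(j+1) + r w_(j+2) of the eta-eigendirection shrinks by eta at each
   step, while the positive definite form qform (w_j - eta w_(j+1))
   (w_(j+1) - eta w_(j+2)), which measures the part along the complex pair of
   roots, grows by 1/r = eta.  At the start the first quantity is of order n
   and the second is bounded, because the differences are remainders of floors
   and lie in [0, eta).  After k - 3 steps the square of the first divided by
   the second has shrunk by the factor eta^(3(k-3)), so it is still large when
   n >= U eta^(3k/2); and a triple whose eta-coordinate dominates the rest is
   positive. *)

Lemma cubic_factor (a b c : Z) (eta t : R) :
  cubic a b c eta = 0 ->
  cubic a b c t =
    (t - eta) * (t ^ 2 + (eta - IZR a) * t + (eta ^ 2 - IZR a * eta - IZR b)).
Proof.
  unfold cubic; intros Hroot.
  replace (IZR c) with (eta ^ 3 - IZR a * eta ^ 2 - IZR b * eta) by lra.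
  ring.
Qed.

Lemma disc_neg_of_unique_root (s r eta : R) :
  (forall t, (t - eta) * (t ^ 2 + s * t + r) = 0 -> t = eta) ->
  r <> eta ^ 2 -> s ^ 2 < 4 * r.
Proof.
  intros Huniq Hr.
  destruct (Rlt_or_le (s ^ 2) (4 * r)) as [Hlt | Hge]; [exact Hlt | exfalso].
  set (d := sqrt (s ^ 2 - 4 * r)).
  assert (Hdd : d * d = s ^ 2 - 4 * r) by (apply sqrt_sqrt; lra).
  assert (Hroot : forall e, e * e = 1 -> (- s + e * d) / 2 = eta).
  { intros e He; apply Huniq.
    replace (((- s + e * d) / 2) ^ 2 + s * ((- s + e * d) / 2) + r)
      with ((e * e * (d * d) - s ^ 2 + 4 * r) / 4) by field.
    rewrite He, Hdd; field. }
  assert (H1 := Hroot 1 ltac:(ring)).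
  assert (H2 := Hroot (-1) ltac:(ring)).
  apply Hr; nra.
Qed.

Lemma quadratic_pos (s r t : R) : s ^ 2 < 4 * r -> 0 < t ^ 2 + s * t + r.
Proof.
  intros Hd.
  assert (4 * (t ^ 2 + s * t + r) = (2 * t + s) ^ 2 + (4 * r - s ^ 2)) by ring.
  assert (0 <= (2 * t + s) ^ 2) by apply pow2_ge_0.
  lra.
Qed.

Definition qform (s r u v : R) : R := u ^ 2 + s * u * v + r * v ^ 2.

Lemma qform_nonneg (s r u v : R) : s ^ 2 < 4 * r -> 0 <= qform s r u v.
Proof.
  intros Hd; unfold qform.
  assert (4 * (u ^ 2 + s * u * v + r * v ^ 2)
          = (2 * u + s * v) ^ 2 + (4 * r - s ^ 2) * v ^ 2) by ring.
  assert (0 <= (2 * u + s * v) ^ 2) by apply pow2_ge_0.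
  assert (0 <= v ^ 2) by apply pow2_ge_0.
  nra.
Qed.

Lemma sum_abs_sq_le_qform (s r u v : R) : s ^ 2 < 4 * r ->
  (Rabs u + Rabs v) ^ 2 <= 8 * (1 + r) / (4 * r - s ^ 2) * qform s r u v.
Proof.
  intros Hd; unfold qform.
  set (q := u ^ 2 + s * u * v + r * v ^ 2).
  set (d := 4 * r - s ^ 2).
  assert (Hd0 : 0 < d) by (unfold d; lra).
  assert (Hv : d * v ^ 2 <= 4 * q).
  { assert (4 * q = (2 * u + s * v) ^ 2 + d * v ^ 2) by (unfold q, d; ring).
    assert (0 <= (2 * u + s * v) ^ 2) by apply pow2_ge_0. lra. }
  assert (Hu : d * u ^ 2 <= 4 * r * q).
  { assert (4 * r * q = (2 * r * v + s * u) ^ 2 + d * u ^ 2) by (unfold q, d; ring).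
    assert (0 <= (2 * r * v + s * u) ^ 2) by apply pow2_ge_0. lra. }
  assert (Habs : (Rabs u + Rabs v) ^ 2 <= 2 * (u ^ 2 + v ^ 2)).
  { rewrite <- (pow2_abs u), <- (pow2_abs v).
    assert (0 <= (Rabs u - Rabs v) ^ 2) by apply pow2_ge_0. nra. }
  replace (8 * (1 + r) / d * q) with (2 * (4 * (1 + r) * q / d)) by (field; lra).
  apply Rle_trans with (1 := Habs), Rmult_le_compat_l; [lra |].
  apply Rmult_le_reg_r with d; [exact Hd0 |].
  unfold Rdiv; rewrite Rmult_assoc, Rinv_l by lra.
  nra.
Qed.

Lemma positive_of_small_diffs (s r eta u0 u1 u2 : R) :
  1 < eta -> s ^ 2 < 4 * r ->
  (eta ^ 2 + s * eta + r + 1 + Rabs (eta + s)) *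
    (Rabs (u0 - eta * u1) + Rabs (u1 - eta * u2)) < u0 + s * u1 + r * u2 ->
  0 < u0 /\ 0 < u1 /\ 0 < u2.
Proof.
  intros Heta Hd Hdom.
  set (D := eta ^ 2 + s * eta + r) in Hdom.
  set (d0 := u0 - eta * u1) in Hdom.
  set (d1 := u1 - eta * u2) in Hdom.
  assert (HD : 0 < D) by (apply quadratic_pos; exact Hd).
  assert (Hu2 : D * u2 = u0 + s * u1 + r * u2 - d0 - (eta + s) * d1)
    by (unfold D, d0, d1; ring).
  assert (Hd0 := Rle_abs d0). assert (Hd0' := Rle_abs (- d0)).
  assert (Hd1 := Rle_abs d1). assert (Hd1' := Rle_abs (- d1)).
  rewrite Rabs_Ropp in Hd0', Hd1'.
  assert (Hes : (eta + s) * d1 <= Rabs (eta + s) * Rabs d1)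
    by (rewrite <- Rabs_mult; apply Rle_abs).
  assert (Hes0 := Rabs_pos (eta + s)).
  assert (Hgt : Rabs d0 + Rabs d1 < u2).
  { apply Rmult_lt_reg_l with D; [exact HD |]. nra. }
  assert (u1 = d1 + eta * u2) by (unfold d1; ring).
  assert (u0 = d0 + eta * u1) by (unfold d0; ring).
  assert (Rabs d0 < u1) by nra.
  split; [nra | split; lra].
Qed.

Definition dominance_const (s r eta : R) : R :=
  (eta ^ 2 + s * eta + r + 1 + Rabs (eta + s)) ^ 2 *
  (8 * (1 + r) / (4 * r - s ^ 2)).

Lemma dominance_const_nonneg (s r eta : R) :
  s ^ 2 < 4 * r -> 0 <= dominance_const s r eta.
Proof.
  intros Hd; unfold dominance_const.
  apply Rmult_le_pos; [apply pow2_ge_0 |].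
  apply Rle_mult_inv_pos; nra.
Qed.

Lemma positive_of_dominant (s r eta u0 u1 u2 : R) :
  1 < eta -> s ^ 2 < 4 * r ->
  0 < u0 + s * u1 + r * u2 ->
  dominance_const s r eta * qform s r (u0 - eta * u1) (u1 - eta * u2)
    < (u0 + s * u1 + r * u2) ^ 2 ->
  0 < u0 /\ 0 < u1 /\ 0 < u2.
Proof.
  intros Heta Hd Hz Hsq.
  apply (positive_of_small_diffs s r eta); [exact Heta | exact Hd |].
  unfold dominance_const in Hsq.
  set (K0 := eta ^ 2 + s * eta + r + 1 + Rabs (eta + s)) in *.
  set (Y := Rabs (u0 - eta * u1) + Rabs (u1 - eta * u2)).
  assert (HY := sum_abs_sq_le_qform s r (u0 - eta * u1) (u1 - eta * u2) Hd).
  fold Y in HY.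
  assert (HK0 : 0 <= K0).
  { assert (0 < eta ^ 2 + s * eta + r) by (apply quadratic_pos; exact Hd).
    assert (0 <= Rabs (eta + s)) by apply Rabs_pos.
    unfold K0; lra. }
  assert (HY0 : 0 <= Y) by (unfold Y; assert (H1 := Rabs_pos (u0 - eta * u1));
                            assert (H2 := Rabs_pos (u1 - eta * u2)); lra).
  assert (HKY : (K0 * Y) ^ 2 < (u0 + s * u1 + r * u2) ^ 2).
  { rewrite Rpow_mult_distr.
    eapply Rle_lt_trans; [| exact Hsq].
    rewrite Rmult_assoc; apply Rmult_le_compat_l; [apply pow2_ge_0 | exact HY]. }
  nra.
Qed.

Definition back_rec (A B C : R) (w : nat -> R) : Prop :=
  forall j, w j = A * w (S j) + B * w (S (S j)) + C * w (S (S (S j))).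

Definition dominant_coord (s r : R) (w : nat -> R) (j : nat) : R :=
  w j + s * w (S j) + r * w (S (S j)).

Definition recessive_norm (s r eta : R) (w : nat -> R) (j : nat) : R :=
  qform s r (w j - eta * w (S j)) (w (S j) - eta * w (S (S j))).

Section Invariants.

Variables (s r eta : R) (w : nat -> R).
Hypothesis Hw : back_rec (eta - s) (s * eta - r) (r * eta) w.

Lemma dominant_coord_succ (j : nat) :
  eta * dominant_coord s r w (S j) = dominant_coord s r w j.
Proof. unfold dominant_coord; rewrite (Hw j); ring. Qed.

Lemma recessive_norm_succ (j : nat) :
  recessive_norm s r eta w j = r * recessive_norm s r eta w (S j).
Proof. unfold recessive_norm, qform; rewrite (Hw j); ring. Qed.

Lemma dominant_coord_pow (j : nat) :
  eta ^ j * dominant_coord s r w j = dominant_coord s r w 0.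
Proof.
  induction j as [| j IH]; [simpl; ring |].
  rewrite <- IH, <- (dominant_coord_succ j); simpl; ring.
Qed.

Lemma recessive_norm_pow (j : nat) :
  recessive_norm s r eta w 0 = r ^ j * recessive_norm s r eta w j.
Proof.
  induction j as [| j IH]; [simpl; ring |].
  rewrite IH, (recessive_norm_succ j); simpl; ring.
Qed.

End Invariants.

Lemma back_rec_positive (s r eta : R) (w : nat -> R) (j : nat) :
  1 < eta -> s ^ 2 < 4 * r -> r * eta = 1 ->
  back_rec (eta - s) (s * eta - r) (r * eta) w ->
  0 < dominant_coord s r w 0 ->
  dominance_const s r eta * eta ^ (3 * j) * recessive_norm s r eta w 0
    < dominant_coord s r w 0 ^ 2 ->
  0 < w j /\ 0 < w (S j) /\ 0 < w (S (S j)).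
Proof.
  intros Heta Hd Hre Hw Hz Hsq.
  set (e := eta ^ j).
  assert (He : 0 < e) by (apply pow_lt; lra).
  assert (Hz0 := dominant_coord_pow s r eta w Hw j). fold e in Hz0.
  assert (Hq0 : e * recessive_norm s r eta w 0 = recessive_norm s r eta w j).
  { rewrite (recessive_norm_pow s r eta w Hw j), <- Rmult_assoc.
    unfold e; rewrite <- Rpow_mult_distr, (Rmult_comm eta r), Hre, pow1; ring. }
  rewrite (Nat.mul_comm 3), pow_mult in Hsq. fold e in Hsq.
  assert (Hzj : 0 < dominant_coord s r w j) by nra.
  apply (positive_of_dominant s r eta); [exact Heta | exact Hd | exact Hzj |].
  fold (dominant_coord s r w j) (recessive_norm s r eta w j).
  rewrite <- Hq0.
  apply Rmult_lt_reg_l with (e ^ 2); [apply pow_lt; exact He |].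
  rewrite <- Rpow_mult_distr, Hz0.
  eapply Rle_lt_trans; [| exact Hsq]; right; ring.
Qed.

Lemma dominant_coord_start (s r eta : R) (w : nat -> R) :
  1 <= eta -> 0 <= r ->
  0 <= w 0%nat - eta * w 1%nat < eta -> 0 <= w 1%nat - eta * w 2%nat < eta ->
  (eta ^ 2 + s * eta + r) / eta ^ 2 * w 0%nat - (Rabs s + 2 * r)
    <= dominant_coord s r w 0.
Proof.
  intros Heta Hr Hu Hv; unfold dominant_coord.
  set (u := w 0%nat - eta * w 1%nat) in Hu.
  set (v := w 1%nat - eta * w 2%nat) in Hv.
  assert (Hu' : s * u <= Rabs s * eta).
  { apply Rle_trans with (Rabs s * u);
      [apply Rmult_le_compat_r; [lra | apply Rle_abs] |
       apply Rmult_le_compat_l; [apply Rabs_pos | lra]]. }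
  apply Rmult_le_reg_r with (eta ^ 2); [apply pow_lt; lra |].
  replace ((w 0%nat + s * w 1%nat + r * w 2%nat) * eta ^ 2) with
    ((eta ^ 2 + s * eta + r) * w 0%nat - (s * eta + r) * u - r * eta * v)
    by (unfold u, v; ring).
  replace (((eta ^ 2 + s * eta + r) / eta ^ 2 * w 0%nat - (Rabs s + 2 * r)) * eta ^ 2)
    with ((eta ^ 2 + s * eta + r) * w 0%nat - (Rabs s + 2 * r) * eta ^ 2)
    by (field; lra).
  assert (s * eta * u <= Rabs s * eta * eta) by nra.
  assert (r * u <= r * (eta * eta)) by (apply Rmult_le_compat_l; nra).
  assert (r * eta * v <= r * eta * eta) by (apply Rmult_le_compat_l; nra).
  nra.
Qed.

Lemma recessive_norm_start (s r eta : R) (w : nat -> R) :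
  0 <= r ->
  0 <= w 0%nat - eta * w 1%nat < eta -> 0 <= w 1%nat - eta * w 2%nat < eta ->
  recessive_norm s r eta w 0 <= eta ^ 2 * (1 + Rabs s + r).
Proof.
  intros Hr Hu Hv; unfold recessive_norm, qform.
  set (u := w 0%nat - eta * w 1%nat) in *.
  set (v := w (S 0) - eta * w (S (S 0))) in *.
  assert (Huv : s * u * v <= Rabs s * (eta * eta)).
  { rewrite Rmult_assoc.
    apply Rle_trans with (Rabs s * (u * v));
      [apply Rmult_le_compat_r; [nra | apply Rle_abs] |
       apply Rmult_le_compat_l; [apply Rabs_pos | nra]]. }
  assert (u ^ 2 <= eta ^ 2) by nra.
  assert (r * v ^ 2 <= r * eta ^ 2) by (apply Rmult_le_compat_l; nra).
  nra.
Qed.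

Lemma threshold_sq (alpha beta M N E : R) :
  0 < alpha -> 0 <= beta -> 0 <= M -> 1 <= E ->
  (beta + M + 1) / alpha * E <= N ->
  0 < alpha * N - beta /\ M * E ^ 2 < (alpha * N - beta) ^ 2.
Proof.
  intros Ha Hb HM HE HN.
  assert (HaN : (beta + M + 1) * E <= alpha * N).
  { replace ((beta + M + 1) * E) with (alpha * ((beta + M + 1) / alpha * E))
      by (field; lra).
    apply Rmult_le_compat_l; lra. }
  assert (Hlow : (M + 1) * E <= alpha * N - beta) by nra.
  split; [nra |].
  apply Rlt_le_trans with (((M + 1) * E) ^ 2); [nra |].
  apply pow_incr; nra.
Qed.

(* (beta + K C0 + 1) / alpha, where alpha n - beta and C0 are the bounds of
   dominant_coord_start and recessive_norm_start and K is dominance_const. *)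
Definition threshold (s r eta : R) : R :=
  (Rabs s + 2 * r + dominance_const s r eta * (eta ^ 2 * (1 + Rabs s + r)) + 1)
  / ((eta ^ 2 + s * eta + r) / eta ^ 2).

Lemma back_rec_positive_of_start (s r eta : R) (w : nat -> R) (j : nat) (E : R) :
  1 < eta -> s ^ 2 < 4 * r -> r * eta = 1 ->
  back_rec (eta - s) (s * eta - r) (r * eta) w ->
  0 <= w 0%nat - eta * w 1%nat < eta -> 0 <= w 1%nat - eta * w 2%nat < eta ->
  1 <= E -> eta ^ (3 * j) <= E ^ 2 ->
  threshold s r eta * E <= w 0%nat ->
  0 < w j /\ 0 < w (S j) /\ 0 < w (S (S j)).
Proof.
  intros Heta Hd Hre Hw Hu Hv HE HjE HN.
  assert (Hr : 0 < r) by nra.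
  assert (HD : 0 < eta ^ 2 + s * eta + r) by (apply quadratic_pos; exact Hd).
  assert (HK := dominance_const_nonneg s r eta Hd).
  set (K := dominance_const s r eta) in *.
  set (C0 := eta ^ 2 * (1 + Rabs s + r)).
  assert (HC0 : 0 <= C0) by (unfold C0; assert (0 <= Rabs s) by apply Rabs_pos; nra).
  destruct (threshold_sq ((eta ^ 2 + s * eta + r) / eta ^ 2) (Rabs s + 2 * r)
              (K * C0) (w 0%nat) E) as [Hpos Hsq];
    [apply Rdiv_lt_0_compat; nra | assert (0 <= Rabs s) by apply Rabs_pos; lra |
     nra | exact HE | exact HN |].
  assert (Hz := dominant_coord_start s r eta w ltac:(lra) ltac:(lra) Hu Hv).
  assert (Hq := recessive_norm_start s r eta w ltac:(lra) Hu Hv).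
  assert (Hq0 : 0 <= recessive_norm s r eta w 0) by apply qform_nonneg, Hd.
  apply (back_rec_positive s r eta w j Heta Hd Hre Hw); [lra |].
  assert (Hpow : 0 < eta ^ (3 * j)) by (apply pow_lt; lra).
  apply Rle_lt_trans with (K * C0 * E ^ 2); [| nra].
  fold C0 in Hq.
  rewrite Rmult_assoc, (Rmult_assoc K C0).
  apply Rmult_le_compat_l; [exact HK |].
  rewrite Rmult_comm; apply Rmult_le_compat; nra.
Qed.

Lemma floor_div_digit (m eta : R) :
  0 < eta -> 0 <= m - eta * IZR (Int_part (m / eta)) < eta.
Proof.
  intros Heta.
  destruct (base_Int_part (m / eta)) as [Hle Hgt].
  replace (m - eta * IZR (Int_part (m / eta)))
    with (eta * (m / eta - IZR (Int_part (m / eta)))) by (field; lra).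
  set (f := m / eta - IZR (Int_part (m / eta))).
  assert (0 <= f < 1) by (unfold f; lra).
  split; nra.
Qed.

Lemma Rpower_three_halves_bounds (eta : R) (k : nat) :
  1 < eta ->
  1 <= Rpower eta (3 * INR k / 2) /\
  eta ^ (3 * (k - 3)) <= Rpower eta (3 * INR k / 2) ^ 2.
Proof.
  intros Heta.
  set (E := Rpower eta (3 * INR k / 2)).
  assert (HE2 : E ^ 2 = eta ^ (3 * k)).
  { replace (E ^ 2) with (E * E) by ring.
    unfold E; rewrite <- Rpower_plus, <- Rpower_pow by lra.
    f_equal; rewrite mult_INR; simpl; field. }
  assert (HE0 : 0 < E) by (unfold E, Rpower; apply exp_pos).
  assert (H1 : 1 <= eta ^ (3 * k)) by (apply pow_R1_Rle; lra).
  split; [nra |].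
  rewrite HE2; apply Rle_pow; [lra | lia].
Qed.

Fixpoint back_seq (a b u0 u1 u2 : Z) (j : nat) : Z :=
  match j with
  | O => u0
  | 1%nat => u1
  | 2%nat => u2
  | S (S (S j' as j1) as j2) =>
      (back_seq a b u0 u1 u2 j' - a * back_seq a b u0 u1 u2 j1
       - b * back_seq a b u0 u1 u2 j2)%Z
  end.

Lemma satisfies_rec_rev (a b : Z) (k : nat) (w : nat -> Z) :
  (forall j, w (S (S (S j))) = w j - a * w (S j) - b * w (S (S j)))%Z ->
  satisfies_rec a b 1 k (fun i => w (k - i)%nat).
Proof.
  intros Hw i Hi Hik.
  replace (k - i)%nat with (S (S (S (k - (i + 3))))) by lia.
  replace (k - (i + 1))%nat with (S (S (k - (i + 3)))) by lia.
  replace (k - (i + 2))%nat with (S (k - (i + 3))) by lia.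
  rewrite Hw; ring.
Qed.

Lemma back_rec_IZR (a b : Z) (w : nat -> Z) :
  (forall j, w (S (S (S j))) = w j - a * w (S j) - b * w (S (S j)))%Z ->
  back_rec (IZR a) (IZR b) 1 (fun j => IZR (w j)).
Proof.
  intros Hw j.
  rewrite Hw, !minus_IZR, !mult_IZR; ring.
Qed.

Theorem theorem7 (a b c : Z) (eta1 : R) :
  (0 <= a)%Z -> (0 <= b)%Z -> c = 1%Z ->
  cubic a b c eta1 = 0 ->
  (forall t : R, cubic a b c t = 0 -> t = eta1) ->
  1 < eta1 ->
  exists U : R, forall n k : nat,
    (0 < n)%nat -> (4 <= k)%nat ->
    U * Rpower eta1 (3 * INR k / 2) <= INR n ->
    exists x : nat -> Z,
      positive_seq x /\ satisfies_rec a b c k x /\ x k = Z.of_nat n.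
Proof.
  intros _ _ -> Hroot Huniq Heta.
  set (s := eta1 - IZR a). set (r := eta1 ^ 2 - IZR a * eta1 - IZR b).
  assert (Hre : r * eta1 = 1) by (unfold cubic in Hroot; unfold r; lra).
  assert (Hd : s ^ 2 < 4 * r).
  { apply (disc_neg_of_unique_root s r eta1); [| intro; nra].
    intros t Ht; apply Huniq; rewrite (cubic_factor a b 1 eta1 t Hroot); exact Ht. }
  exists (threshold s r eta1).
  intros n k _ Hk HN.
  set (Q := Int_part (IZR (Z.of_nat n) / eta1)). set (P := Int_part (IZR Q / eta1)).
  set (w := back_seq a b (Z.of_nat n) Q P).
  exists (fun i => w (k - i)%nat).
  split; [| split; [now apply satisfies_rec_rev | now rewrite Nat.sub_diag]].
  assert (Hw := back_rec_IZR a b w (fun j => eq_refl)).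
  replace (IZR a) with (eta1 - s) in Hw by (unfold s; ring).
  replace (IZR b) with (s * eta1 - r) in Hw by (unfold s, r; ring).
  rewrite <- Hre in Hw.
  destruct (Rpower_three_halves_bounds eta1 k Heta) as [HE HjE].
  rewrite (INR_IZR_INZ n) in HN.
  assert (Heta0 : 0 < eta1) by lra.
  destruct (back_rec_positive_of_start s r eta1 _ (k - 3) _ Heta Hd Hre Hw
              (floor_div_digit _ eta1 Heta0) (floor_div_digit _ eta1 Heta0)
              HE HjE HN) as (H3 & H2 & H1).
  unfold positive_seq.
  replace (k - 1)%nat with (S (S (k - 3))) by lia.
  replace (k - 2)%nat with (S (k - 3)) by lia.
  split; [| split]; apply lt_IZR; assumption.
Qed.
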